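(* Let $N\ge 2$ be an integer and consider the one-mode projection graph $G_N$ on the primes $\le N$ defined below. For every prime $p\le N$, the degree of $p$ in $G_N$ equals $\pi\left(\frac{N}{p}\right)$, where $\pi(x)$ is the number of primes $\le x$.
   Context: The graph $G_N$ has vertex set the primes $p\le N$. Two distinct primes $p,p'\le N$ are adjacent iff some composite integer $c\le N$ is divisible by both $p$ and $p'$ (equivalently the number of such composites, which is the weight of the edge, is positive). A prime $p$ carries a self-loop iff $p^2\le N$. The degree of $p$ is the number of distinct primes $p'\ne p$ adjacent to $p$, plus $1$ if $p$ carries a self-loop. *)

From mathcomp Require Import all_boot.
Set Implicit Arguments. Unset Strict Implicit. Unset Printing Implicit Defensive.

Definition composite (c : nat) : bool := (1 < c) && ~~ prime c.

Definition edge_weight (N p p' : nat) : nat :=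
  #|[set c : 'I_N.+1 | composite c && (p %| c) && (p' %| c)]|.

Definition adjacent (N p p' : nat) : bool :=
  [&& prime p, prime p', p <= N, p' <= N, p != p' & 0 < edge_weight N p p'].

Definition self_loop (N p : nat) : bool := p ^ 2 <= N.

Definition degree (N p : nat) : nat :=
  #|[set q : 'I_N.+1 | prime q && adjacent N p q]| + self_loop N p.

Definition primepi (x : nat) : nat := #|[set q : 'I_x.+1 | prime q]|.

From mathcomp Require Import all_boot.

(* Two distinct primes p, q have a common composite multiple below N exactly
   when p * q <= N, because p * q is their least common multiple and is
   itself composite.  Hence the neighbours of p are the primes q != p with
   q <= N / p, and the self-loop (p * p <= N, i.e. p <= N / p) supplies the
   missing prime q = p, so the degree counts all primes up to N / p. *)

Lemma card_set_ord (n : nat) (P : pred nat) :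
  #|[set i : 'I_n | P i]| = count P (iota 0 n).
Proof.
rewrite -sum1_count -(subn0 n) -/(index_iota 0 n) big_mkord subn0 -sum1_card.
by apply: eq_bigl => i; rewrite inE.
Qed.

Lemma count_iota_ltn (P : pred nat) (m n : nat) : m <= n ->
  count (fun i => P i && (i < m)) (iota 0 n) = count P (iota 0 m).
Proof.
move=> le_mn; rewrite -(subnKC le_mn) iotaD count_cat add0n.
rewrite [X in _ + X](eq_in_count (a2 := pred0)) ?count_pred0 ?addn0.
  by apply: eq_in_count => i; rewrite mem_iota => /andP[_ ->]; rewrite andbT.
by move=> i; rewrite mem_iota leqNgt => /andP[/negbTE-> _]; rewrite andbF.
Qed.

Lemma count_predD1 [T : eqType] [a : pred T] [x : T] [s : seq T] :
  uniq s -> a x -> count a s = count [pred y | a y & y != x] s + (x \in s).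
Proof.
move=> uniq_s ax; rewrite -count_uniq_mem // -size_filter.
rewrite -(count_predC (pred1 x)) addnC !count_filter; congr (_ + _).
  by apply: eq_count => y /=; rewrite andbC.
by apply: eq_count => y /=; case: eqP => // ->; rewrite ax.
Qed.

Lemma composite_mul (m n : nat) : 1 < m -> 1 < n -> composite (m * n).
Proof.
move=> m_gt1 n_gt1; rewrite /composite (ltn_mul m_gt1 n_gt1).
apply/primeP => -[_ /(_ m (dvdn_mulr n (dvdnn m)))] /orP[] /eqP m_eq.
  by rewrite m_eq in m_gt1.
by have := ltn_Pmulr n_gt1 (ltnW m_gt1); rewrite -m_eq ltnn.
Qed.

Lemma edge_weight_gt0 (N p q : nat) : prime p -> prime q -> p != q ->
  (0 < edge_weight N p q) = (p * q <= N).
Proof.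
move=> pr_p pr_q neq_pq; apply/card_gt0P/idP => [[c]|le_pqN].
  rewrite inE => /andP[/andP[/andP[c_gt1 _] p_dvd_c] q_dvd_c].
  have cop_pq : coprime p q by rewrite prime_coprime // dvdn_prime2.
  have pq_dvd_c : p * q %| c by rewrite Gauss_dvd // p_dvd_c.
  exact: leq_trans (dvdn_leq (ltnW c_gt1) pq_dvd_c) (ltn_ord c).
exists (Ordinal (le_pqN : p * q < N.+1)).
by rewrite inE /= dvdn_mulr // dvdn_mull // composite_mul ?prime_gt1.
Qed.

Lemma adjacent_primesE (N p q : nat) : prime p -> prime q -> p <= N -> q <= N ->
  adjacent N p q = (q != p) && (p * q <= N).
Proof.
move=> pr_p pr_q le_pN le_qN; rewrite /adjacent pr_p pr_q le_pN le_qN eq_sym /=.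
have [// | neq_qp] := eqVneq q p.
by rewrite edge_weight_gt0 // eq_sym.
Qed.

Theorem mainTheorem8 (N p : nat) :
  2 <= N -> prime p -> p <= N -> degree N p = primepi (N %/ p).
Proof.
move=> _ pr_p le_pN; have p_gt0 := prime_gt0 pr_p; set M := N %/ p.
have le_MN : M.+1 <= N.+1 by rewrite ltnS leq_div.
have neighbourE : {in iota 0 N.+1, forall q,
    prime q && adjacent N p q = (prime q && (q != p)) && (q < M.+1)}.
  move=> q; rewrite mem_iota => /andP[_ lt_qN].
  case pr_q: (prime q) => //=.
  by rewrite adjacent_primesE // ltnS leq_divRL // mulnC.
rewrite /degree /primepi (card_set_ord _ (fun q => prime q && adjacent N p q)).
rewrite (card_set_ord _ prime) (eq_in_count neighbourE).
rewrite count_iota_ltn // (count_predD1 (iota_uniq 0 M.+1) pr_p).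
by rewrite mem_iota /self_loop /M ltnS leq_divRL.
Qed.
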